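(* Let $P,Q\in R[x][\partial]$. If $P$ and $Q$ are $R$-primitive, then so is $PQ$.
   Context: $R$ is a principal ideal domain; $\sigma$ is an $R$-automorphism of $R[x]$ with $\sigma(x)=\gamma x+\tau$ ($\gamma,\tau\in R$, $\gamma$ a unit), $\delta$ an $R$-linear $\sigma$-derivation of $R[x]$ with $\delta(x)$ of degree at most $1$; $R[x][\partial]$ is the Ore algebra with $\partial p=\sigma(p)\partial+\delta(p)$. Writing $L=a_kf_k\partial^k+\dots+a_0f_0$ with $a_i\in R$ and $f_i\in R[x]$ primitive (coefficients with gcd $1$), $L$ is $R$-primitive if $\gcd(a_0,\dots,a_k)=1$. *)

From HB Require Import structures.
From mathcomp Require Import all_boot all_order all_algebra.
Set Implicit Arguments. Unset Strict Implicit. Unset Printing Implicit Defensive.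
Import Order.TTheory GRing.Theory Num.Theory.
Local Open Scope ring_scope.

Definition dvdR (R : comPzRingType) (a b : R) : Prop := exists c : R, b = c * a.

Definition is_ideal (R : comPzRingType) (I : R -> Prop) : Prop :=
  [/\ I 0, (forall x y, I x -> I y -> I (x + y)) & (forall r x, I x -> I (r * x))].

Definition PID (R : idomainType) : Prop :=
  forall I : R -> Prop, is_ideal I -> exists g : R, forall x, I x <-> dvdR g x.

Definition coprime_family (R : comUnitRingType) (I : Type) (a : I -> R) : Prop :=
  forall d : R, (forall i, dvdR d (a i)) -> d \is a GRing.unit.

Definition primitive_poly (R : idomainType) (f : {poly R}) : Prop :=
  coprime_family (fun j : nat => f`_j).

Definition ore_sigma (R : idomainType) (gamma tau : R) (p : {poly R}) : {poly R} :=
  p \Po (gamma *: 'X + tau%:P).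

Definition ore_delta_ok (R : idomainType) (gamma tau : R)
    (delta : {poly R} -> {poly R}) : Prop :=
  [/\ (forall (c : R) (p q : {poly R}), delta (c *: p + q) = c *: delta p + delta q),
      (forall p q : {poly R},
          delta (p * q) = ore_sigma gamma tau p * delta q + delta p * q)
    & (size (delta 'X) <= 2)%N].

(* Elements of the Ore algebra R[x][d] are represented as polynomials in d
   with coefficients in R[x] written on the LEFT: L = \sum_i L`_i d^i,
   i.e. L : {poly {poly R}} with 'X playing the role of d.
   The additive structure is that of {poly {poly R}}; the product is ore_mul. *)

(* Left multiplication by d:  d * (\sum_j q_j d^j) = \sum_j (sigma(q_j) d^(j+1) + delta(q_j) d^j). *)
Definition ore_dmul (R : idomainType) (gamma tau : R) (delta : {poly R} -> {poly R})
    (Q : {poly {poly R}}) : {poly {poly R}} :=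
  \sum_(j < size Q)
     ((ore_sigma gamma tau Q`_j)%:P * 'X^(j.+1) + (delta Q`_j)%:P * 'X^j).

Definition ore_mul (R : idomainType) (gamma tau : R) (delta : {poly R} -> {poly R})
    (P Q : {poly {poly R}}) : {poly {poly R}} :=
  \sum_(i < size P) (P`_i)%:P * iter i (ore_dmul gamma tau delta) Q.

Definition R_primitive (R : idomainType) (L : {poly {poly R}}) : Prop :=
  exists (a : nat -> R) (f : nat -> {poly R}),
    [/\ forall i, L`_i = a i *: f i,
        forall i, primitive_poly (f i)
      & coprime_family (fun i : 'I_(size L) => a i)].

From mathcomp Require Import all_boot all_algebra ring.
From Stdlib Require Import Classical ClassicalEpsilon.
Set Implicit Arguments. Unset Strict Implicit. Unset Printing Implicit Defensive.
Import GRing.Theory.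
Local Open Scope ring_scope.

(** Since R is a PID, an operator is R-primitive exactly when no prime p of R
    (p = 0 included) divides all coefficients of all its coefficients.  For a
    prime p, the polynomials of R[x] with all coefficients divisible by p form
    a prime ideal (Gauss's lemma) that is stable under sigma, sigma^-1 and
    delta.  Modulo such an ideal the Ore product behaves like a product in a
    domain: if m and n are the largest indices at which P and Q have
    coefficients outside the ideal, the coefficient of d^(m+n) in PQ is
    congruent to P_m sigma^m(Q_n), which lies outside the ideal.  Hence a prime
    dividing all coefficients of PQ divides all coefficients of P or of Q. *)

Section Ideals.
Variables (S : comPzRingType) (I : S -> Prop).
Hypothesis I_ideal : is_ideal I.

Lemma ideal0 : I 0.
Proof. by case: I_ideal. Qed.

Lemma idealD x y : I x -> I y -> I (x + y).
Proof. by case: I_ideal => _ + _; apply. Qed.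

Lemma idealMl r x : I x -> I (r * x).
Proof. by case: I_ideal => _ _; apply. Qed.

Lemma idealMr x r : I x -> I (x * r).
Proof. by rewrite mulrC; apply: idealMl. Qed.

Lemma idealB x y : I x -> I y -> I (x - y).
Proof. by move=> Ix Iy; apply: idealD => //; rewrite -mulN1r; apply: idealMl. Qed.

Lemma ideal_sum (J : Type) (r : seq J) (P : pred J) (F : J -> S) :
  (forall j, P j -> I (F j)) -> I (\sum_(j <- r | P j) F j).
Proof. by move=> IF; apply: big_ind => //; [apply: ideal0 | apply: idealD]. Qed.

End Ideals.

Section Divisibility.
Variable R : comPzRingType.
Implicit Types x y z : R.

Lemma dvdR_refl x : dvdR x x.
Proof. by exists 1; rewrite mul1r. Qed.

Lemma dvdR_trans x y z : dvdR x y -> dvdR y z -> dvdR x z.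
Proof. by move=> [a ->] [b ->]; exists (b * a); rewrite mulrA. Qed.

Lemma dvdR_ideal x : is_ideal (dvdR x).
Proof.
split=> [|_ _ [a ->] [b ->]|r _ [a ->]]; first by exists 0; rewrite mul0r.
  by exists (a + b); rewrite mulrDl.
by exists (r * a); rewrite mulrA.
Qed.

End Divisibility.

Definition coefs_in (S : comNzRingType) (I : S -> Prop) (p : {poly S}) : Prop :=
  forall i, I p`_i.

Section CoefsIn.
Variables (S : comNzRingType) (I : S -> Prop).
Hypothesis I_ideal : is_ideal I.

Lemma coefs_in_ideal : is_ideal (coefs_in I).
Proof.
split=> [i|p q Ip Iq i|r p Ip i]; first by rewrite coef0; apply: (ideal0 I_ideal).
  by rewrite coefD; apply: (idealD I_ideal).
by rewrite coefM; apply: (ideal_sum I_ideal) => j _; apply: (idealMl I_ideal).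
Qed.

Lemma coefs_in_comp (p q : {poly S}) : coefs_in I p -> coefs_in I (p \Po q).
Proof.
move=> Ip k; rewrite comp_polyE coef_sum.
by apply: (ideal_sum I_ideal) => i _; rewrite coefZ; apply: (idealMr I_ideal).
Qed.

Lemma last_coef_notin (p : {poly S}) : ~ coefs_in I p ->
  exists m, ~ I p`_m /\ forall i, (m < i)%N -> I p`_i.
Proof.
move=> notIp; suff: forall N, (forall i, (N <= i)%N -> I p`_i) ->
    exists m, ~ I p`_m /\ forall i, (m < i)%N -> I p`_i.
  by move/(_ (size p)); apply=> i /(nth_default 0) ->; apply: (ideal0 I_ideal).
elim=> [|N IHN] IN; first by case: notIp => i; apply: IN.
have [INp|] := classic (I p`_N); last by exists N.
by apply: IHN => i; rewrite leq_eqVlt => /orP [/eqP <- //|]; apply: IN.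
Qed.

End CoefsIn.

Section SkewPolynomials.
Variables (S : comNzRingType) (sg dl : S -> S).

(** [ore_mul gamma tau delta] unfolds to [skew_mul (ore_sigma gamma tau) delta]. *)
Definition skew_dmul (Q : {poly S}) : {poly S} :=
  \sum_(j < size Q) ((sg Q`_j)%:P * 'X^(j.+1) + (dl Q`_j)%:P * 'X^j).

Definition skew_mul (P Q : {poly S}) : {poly S} :=
  \sum_(i < size P) (P`_i)%:P * iter i skew_dmul Q.

Lemma skew_dmulE (Q : {poly S}) : skew_dmul Q = map_poly sg Q * 'X + map_poly dl Q.
Proof.
rewrite /skew_dmul big_split /= /map_poly !poly_def mulr_suml.
by congr (_ + _); apply: eq_bigr => j _; rewrite -!mul_polyC // exprSr mulrA.
Qed.

Hypotheses (sg0 : sg 0 = 0) (dl0 : dl 0 = 0).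

Lemma coef_skew_dmul (Q : {poly S}) k :
  (skew_dmul Q)`_k = (if k is k'.+1 then sg Q`_k' else 0) + dl Q`_k.
Proof. by rewrite skew_dmulE coefD coefMX !coef_map_id0 //; case: k. Qed.

Section PrimeIdeal.
Variable I : S -> Prop.
Hypotheses (I_ideal : is_ideal I) (I_prime : forall x y, I (x * y) -> I x \/ I y).
Hypothesis sgB : {morph sg : x y / x - y}.
Hypotheses (sg_stable : forall x, I x -> I (sg x)) (sg_reflect : forall x, I (sg x) -> I x).
Hypothesis dl_stable : forall x, I x -> I (dl x).

Lemma skew_dmul_top (Q : {poly S}) n : (forall k, (n < k)%N -> I Q`_k) ->
  (forall k, (n.+1 < k)%N -> I (skew_dmul Q)`_k) /\
  I ((skew_dmul Q)`_n.+1 - sg Q`_n).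
Proof.
move=> IQ; split=> [[|k] // lt_n_k|]; rewrite coef_skew_dmul.
  by apply: (idealD I_ideal); [apply: sg_stable | apply: dl_stable]; apply: IQ => //; apply: ltnW.
by rewrite [_ + dl _]addrC addrK; apply: dl_stable; apply: IQ.
Qed.

Lemma skew_iter_top (Q : {poly S}) n i : (forall k, (n < k)%N -> I Q`_k) ->
  (forall k, (n + i < k)%N -> I (iter i skew_dmul Q)`_k) /\
  I ((iter i skew_dmul Q)`_(n + i) - iter i sg Q`_n).
Proof.
move=> IQ; elim: i => [|i [IQi topi]] /=.
  by rewrite addn0 subrr; split=> //; apply: (ideal0 I_ideal).
rewrite addnS; have [IQi1 topi1] := skew_dmul_top IQi; split=> //.
rewrite -[X in X - _](subrK (sg (iter i skew_dmul Q)`_(n + i))) -addrA -sgB.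
by apply: (idealD I_ideal) => //; apply: sg_stable.
Qed.

Lemma coef_skew_mul_top (P Q : {poly S}) m n : (m < size P)%N ->
  (forall i, (m < i)%N -> I P`_i) -> (forall k, (n < k)%N -> I Q`_k) ->
  I ((skew_mul P Q)`_(m + n) - P`_m * iter m sg Q`_n).
Proof.
move=> lt_m_P IP IQ.
rewrite /skew_mul coef_sum (bigD1 (Ordinal lt_m_P)) //= coefCM addrAC.
apply: (idealD I_ideal).
  by rewrite -mulrBr addnC; apply: (idealMl I_ideal); apply: (skew_iter_top m IQ).2.
apply: (ideal_sum I_ideal) => i neq_i_m; rewrite coefCM.
case: (ltngtP i m) => [lt_i_m|lt_m_i|eq_i_m].
- by apply: (idealMl I_ideal); apply: (skew_iter_top i IQ).1; rewrite addnC ltn_add2r.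
- by apply: (idealMr I_ideal); apply: IP.
- by case/eqP: neq_i_m; apply: val_inj.
Qed.

Lemma iter_sg_reflect m x : I (iter m sg x) -> I x.
Proof. by elim: m => //= m IHm /sg_reflect/IHm. Qed.

Theorem skew_gauss (P Q : {poly S}) :
  coefs_in I (skew_mul P Q) -> coefs_in I P \/ coefs_in I Q.
Proof.
move=> IPQ; apply: NNPP => /not_or_and [notIP notIQ].
have [m [IPm IP]] := last_coef_notin I_ideal notIP.
have [n [IQn IQ]] := last_coef_notin I_ideal notIQ.
have lt_m_P : (m < size P)%N.
  rewrite ltnNge; apply/negP => le_P_m; apply: IPm.
  by rewrite nth_default //; apply: (ideal0 I_ideal).
have := idealB I_ideal (IPQ (m + n)) (coef_skew_mul_top lt_m_P IP IQ).
by rewrite subKr => /I_prime [|/iter_sg_reflect].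
Qed.

End PrimeIdeal.
End SkewPolynomials.

Lemma skew_mul_id (S : comNzRingType) (P Q : {poly S}) :
  skew_mul id (fun=> 0) P Q = P * Q.
Proof.
have dmulX (T : {poly S}) : skew_dmul id (fun=> 0) T = T * 'X.
  by apply/polyP => k; rewrite coef_skew_dmul // coefMX addr0; case: k.
have iterX i : iter i (skew_dmul id (fun=> 0)) Q = Q * 'X^i.
  by elim: i => [|i IHi] /=; rewrite ?mulr1 // dmulX IHi exprSr mulrA.
rewrite /skew_mul -[P in RHS]coefK poly_def mulr_suml; apply: eq_bigr => i _.
by rewrite iterX -mul_polyC mulrA mulrAC.
Qed.

Theorem coefs_in_prime (S : comNzRingType) (I : S -> Prop) :
  is_ideal I -> (forall x y, I (x * y) -> I x \/ I y) ->
  forall P Q : {poly S}, coefs_in I (P * Q) -> coefs_in I P \/ coefs_in I Q.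
Proof.
move=> I_ideal I_prime P Q; rewrite -skew_mul_id.
by apply: skew_gauss => // _ _; apply: (ideal0 I_ideal).
Qed.

(** [0] is a prime element of a domain in this sense; it stands for the zero
    prime ideal. *)
Definition prime_elem (R : comUnitRingType) (p : R) : Prop :=
  p \isn't a GRing.unit /\ forall x y, dvdR p (x * y) -> dvdR p x \/ dvdR p y.

Section Domain.
Variable R : idomainType.

Lemma prime_elem0 : prime_elem (0 : R).
Proof.
split=> [|x y [c]]; first by rewrite unitr0.
rewrite mulr0 => /eqP; rewrite mulf_eq0 => /orP [] /eqP ->; [left | right];
  by exists 0; rewrite mulr0.
Qed.

Lemma primitive_poly1 : primitive_poly (1 : {poly R}).
Proof.
move=> d /(_ 0%N); rewrite coef1 eqxx => -[c c1].
by apply/unitrPr; exists c; rewrite mulrC.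
Qed.

End Domain.

Section PID.
Variable R : idomainType.
Hypothesis R_PID : PID R.
Implicit Types a b d p x y : R.

Lemma PID_bezout (J : finType) (a : J -> R) :
  exists2 g, forall j, dvdR g (a j) & exists r : J -> R, g = \sum_j r j * a j.
Proof.
pose comb z := exists r : J -> R, z = \sum_j r j * a j.
have comb_ideal : is_ideal comb.
  split=> [|_ _ [r ->] [s ->]|c _ [r ->]].
  - by exists (fun=> 0); rewrite big1 // => j _; rewrite mul0r.
  - exists (fun j => r j + s j).
    by rewrite -big_split; apply: eq_bigr => j _; rewrite mulrDl.
  - exists (fun j => c * r j).
    by rewrite mulr_sumr; apply: eq_bigr => j _; rewrite mulrA.
have [g gP] := R_PID comb_ideal.
exists g; last by apply/gP; apply: dvdR_refl.
move=> j; apply/gP; exists (fun k => (k == j)%:R).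
by rewrite (bigD1 j) //= eqxx mul1r big1 ?addr0 // => k /negbTE ->; rewrite mul0r.
Qed.

Lemma PID_irreducible_prime p : p \isn't a GRing.unit ->
  (forall a b, p = a * b -> a \is a GRing.unit \/ b \is a GRing.unit) ->
  prime_elem p.
Proof.
move=> p_nonunit p_irr; split=> // x y [c xyE].
have [px|npx] := classic (dvdR p x); [by left | right].
have [g gdvd [r gE]] := PID_bezout (fun b : bool => if b then p else x).
have g_unit : g \is a GRing.unit.
  have [e pE] := gdvd true.
  case: (p_irr _ _ pE) => // e_unit; case: npx.
  by apply: dvdR_trans (gdvd false); exists e^-1; rewrite pE mulrA mulVr ?mul1r.
have yg : y * g = (r true * y + r false * c) * p.
  rewrite gE big_bool /=; transitivity (r true * y * p + r false * (x * y)).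
    by ring.
  by rewrite xyE; ring.
by exists ((r true * y + r false * c) * g^-1); rewrite mulrAC -yg mulrK.
Qed.

Lemma PID_divisor_chain_stationary (s : nat -> R) :
  (forall n, dvdR (s n.+1) (s n)) -> exists n, dvdR (s n) (s n.+1).
Proof.
move=> s_chain.
have s_mono m n : (m <= n)%N -> dvdR (s n) (s m).
  move=> /subnKC <-; elim: (n - m)%N => [|k IHk]; first by rewrite addn0; apply: dvdR_refl.
  by rewrite addnS; apply: dvdR_trans (s_chain _) IHk.
pose U z := exists n, dvdR (s n) z.
have U_ideal : is_ideal U.
  split=> [|x y [m um] [n un]|r z [n un]]; first by exists 0%N; apply: ideal0 (dvdR_ideal _).
    exists (maxn m n); apply: (idealD (dvdR_ideal _)).
      exact: dvdR_trans (s_mono _ _ (leq_maxl m n)) um.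
    exact: dvdR_trans (s_mono _ _ (leq_maxr m n)) un.
  by exists n; apply: (idealMl (dvdR_ideal _)).
have [g gP] := R_PID U_ideal.
have [n sn_g] : U g by apply/gP; apply: dvdR_refl.
by exists n; apply: dvdR_trans sn_g _; apply/gP; exists n.+1; apply: dvdR_refl.
Qed.

Lemma PID_nonprime_proper_divisor x : x != 0 -> x \isn't a GRing.unit ->
  ~ prime_elem x -> exists a, [/\ dvdR a x, ~ dvdR x a & a \isn't a GRing.unit].
Proof.
move=> x_neq0 x_nonunit x_nonprime.
have [a [b [xE /not_or_and [a_nonunit b_nonunit]]]] :
    exists a b, x = a * b /\ ~ (a \is a GRing.unit \/ b \is a GRing.unit).
  apply: NNPP => no_fact; apply: x_nonprime; apply: PID_irreducible_prime => // a b xE.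
  by apply: NNPP => nab; apply: no_fact; exists a, b.
exists a; split; [by exists b; rewrite xE mulrC | | exact/negP].
move=> [e aE]; apply: b_nonunit; apply/unitrPr; exists e.
have a_neq0 : a != 0 by apply: contraNneq x_neq0 => a0; rewrite xE a0 mul0r.
by apply: (mulIf a_neq0); rewrite mul1r {2}aE xE; ring.
Qed.

Theorem PID_prime_divisor d : d \isn't a GRing.unit ->
  exists p, prime_elem p /\ dvdR p d.
Proof.
move=> d_nonunit; have [->|d_neq0] := eqVneq d 0.
  by exists 0; split; [apply: prime_elem0 | apply: dvdR_refl].
apply: NNPP => no_prime.
(* Otherwise every non-unit divisor of d has a proper non-unit divisor, which
   yields a strictly ascending chain of principal ideals. *)
have step x : exists a, dvdR x d -> x \isn't a GRing.unit ->
    [/\ dvdR a x, ~ dvdR x a & a \isn't a GRing.unit].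
  have [[xd x_nonunit]|] := classic (dvdR x d /\ x \isn't a GRing.unit); last first.
    by move=> nx; exists x => xd x_nonunit; case: nx.
  have x_neq0 : x != 0.
    by apply: contraNneq d_neq0 => x0; case: xd => c ->; rewrite x0 mulr0.
  have x_nonprime : ~ prime_elem x by move=> x_prime; apply: no_prime; exists x.
  by have [a aP] := PID_nonprime_proper_divisor x_neq0 x_nonunit x_nonprime; exists a.
have [F FP] := choice _ step.
pose s n := iter n F d.
have s_div n : dvdR (s n) d /\ s n \isn't a GRing.unit.
  elim: n => [|n [sd s_nonunit]]; first by split=> //; apply: dvdR_refl.
  by have [Fs _ F_nonunit] := FP _ sd s_nonunit; split=> //; apply: dvdR_trans Fs sd.
have s_step n : dvdR (s n.+1) (s n) /\ ~ dvdR (s n) (s n.+1).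
  by have [sd s_nonunit] := s_div n; have [] := FP _ sd s_nonunit.
have [n] := PID_divisor_chain_stationary (fun n => (s_step n).1).
exact: (s_step n).2.
Qed.

Lemma PID_content (f : {poly R}) : exists c g, f = c *: g /\ primitive_poly g.
Proof.
have [->|f_neq0] := eqVneq f 0.
  by exists 0, 1; rewrite scale0r; split=> //; apply: primitive_poly1.
have [g gdvd [r gE]] := PID_bezout (fun j : 'I_(size f) => f`_j).
have [h hP] : exists h : nat -> R, forall j, f`_j = h j * g.
  apply: (choice (fun j c => f`_j = c * g)) => j.
  have [lt_j_f|le_f_j] := ltnP j (size f); first exact: (gdvd (Ordinal lt_j_f)).
  by exists 0; rewrite mul0r nth_default.
exists g, (\poly_(j < size f) h j); split.
  apply/polyP => j; rewrite coefZ coef_poly; case: ltnP => [_|le_f_j].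
    by rewrite hP mulrC.
  by rewrite mulr0 nth_default.
have g_neq0 : g != 0.
  apply: contraNneq f_neq0 => g0; apply/eqP/polyP => j.
  by rewrite hP g0 mulr0 coef0.
move=> d dh; apply/unitrPr.
have [c gE'] : dvdR (d * g) g.
  rewrite {2}gE; apply: (ideal_sum (dvdR_ideal _)) => j _.
  apply: (idealMl (dvdR_ideal _)); rewrite hP.
  have [e ->] : dvdR d (h j) by move: (dh j); rewrite coef_poly ltn_ord.
  by exists e; rewrite mulrA.
by exists c; apply: (mulIf g_neq0); rewrite mul1r {2}gE' mulrA (mulrC d).
Qed.

End PID.

Lemma R_primitive_prime_ndvd (R : idomainType) (L : {poly {poly R}}) p :
  R_primitive L -> prime_elem p -> ~ coefs_in (coefs_in (dvdR p)) L.
Proof.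
move=> [a [f [LE f_prim a_coprime]]] [p_nonunit p_prime] pL.
apply: (negP p_nonunit); apply: a_coprime => i; apply: NNPP => p_ndvd_a.
apply: (negP p_nonunit); apply: (f_prim i) => j.
by have := pL i j; rewrite LE coefZ => /p_prime [/p_ndvd_a|].
Qed.

Lemma PID_R_primitive (R : idomainType) (L : {poly {poly R}}) : PID R ->
  (forall p, prime_elem p -> ~ coefs_in (coefs_in (dvdR p)) L) -> R_primitive L.
Proof.
move=> R_PID L_prime_ndvd.
have [a aP] := choice _ (fun i => PID_content R_PID L`_i).
have [f fP] := choice _ aP.
exists a, f; split=> [i|i|d d_dvd]; try by case: (fP i).
apply: NNPP => /negP d_nonunit.
have [p [p_prime p_dvd_d]] := PID_prime_divisor R_PID d_nonunit.
apply: (L_prime_ndvd p p_prime) => i j.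
have [lt_i_L|le_L_i] := ltnP i (size L); last first.
  by rewrite [L`_i]nth_default // coef0; apply: (ideal0 (dvdR_ideal _)).
have [-> _] := fP i; rewrite coefZ; apply: (idealMr (dvdR_ideal _)).
exact: dvdR_trans p_dvd_d (d_dvd (Ordinal lt_i_L)).
Qed.

Section OreAlgebra.
Variables (R : idomainType) (gamma tau : R) (delta : {poly R} -> {poly R}).
Hypotheses (gamma_unit : gamma \is a GRing.unit) (delta_ok : ore_delta_ok gamma tau delta).

Lemma ore_sigmaK :
  cancel (ore_sigma gamma tau) (comp_poly (gamma^-1 *: ('X - tau%:P))).
Proof.
move=> p; rewrite /ore_sigma -comp_polyA comp_polyD comp_polyZ comp_polyX comp_polyC.
by rewrite scalerA mulrV // scale1r subrK comp_polyXr.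
Qed.

Lemma ore_delta0 : delta 0 = 0.
Proof.
by case: delta_ok => lin _ _; have := lin (-1) 0 0; rewrite scaler0 addr0 scaleN1r addNr.
Qed.

Lemma ore_deltaD : {morph delta : p q / p + q}.
Proof. by case: delta_ok => lin _ _ p q; rewrite -{1}(scale1r p) lin scale1r. Qed.

Lemma ore_deltaZ c : {morph delta : p / c *: p}.
Proof. by case: delta_ok => lin _ _ p; rewrite -[c *: p]addr0 lin ore_delta0 addr0. Qed.

Lemma coefs_in_delta (I : R -> Prop) (p : {poly R}) :
  is_ideal I -> coefs_in I p -> coefs_in I (delta p).
Proof.
move=> I_ideal Ip k; rewrite -[p]coefK poly_def (big_morph delta ore_deltaD ore_delta0).
rewrite coef_sum; apply: (ideal_sum I_ideal) => j _.
by rewrite ore_deltaZ coefZ; apply: (idealMr I_ideal).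
Qed.

Theorem ore_gauss (I : R -> Prop) (P Q : {poly {poly R}}) :
  is_ideal I -> (forall x y, I (x * y) -> I x \/ I y) ->
  coefs_in (coefs_in I) (ore_mul gamma tau delta P Q) ->
  coefs_in (coefs_in I) P \/ coefs_in (coefs_in I) Q.
Proof.
move=> I_ideal I_prime; have Ix_ideal := coefs_in_ideal I_ideal.
apply: (skew_gauss (comp_poly0 _) ore_delta0 Ix_ideal (coefs_in_prime I_ideal I_prime)).
- by move=> p q; apply: comp_polyB.
- by move=> p; apply: coefs_in_comp.
- by move=> p /(coefs_in_comp I_ideal (gamma^-1 *: ('X - tau%:P))); rewrite ore_sigmaK.
- by move=> p; apply: coefs_in_delta.
Qed.

End OreAlgebra.

Theorem mainTheorem15 (R : idomainType) (HR : PID R)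
    (gamma tau : R) (delta : {poly R} -> {poly R})
    (Hgamma : gamma \is a GRing.unit)
    (Hdelta : ore_delta_ok gamma tau delta)
    (P Q : {poly {poly R}}) :
  R_primitive P -> R_primitive Q -> R_primitive (ore_mul gamma tau delta P Q).
Proof.
move=> P_prim Q_prim; apply: PID_R_primitive HR _ => p p_prime PQ_dvd.
have [P_dvd|Q_dvd] := ore_gauss Hgamma Hdelta (dvdR_ideal p) p_prime.2 PQ_dvd.
- exact: R_primitive_prime_ndvd P_prim p_prime P_dvd.
- exact: R_primitive_prime_ndvd Q_prim p_prime Q_dvd.
Qed.
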